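(* Let $\Bbbk$ be an algebraically closed field of characteristic zero and $H$ the $\Bbbk$-algebra generated by $b,c,z$ with relations $b^2=c^2=1$, $bc=cb$, $zb=-bz$, $zc=-cz$, $z^2=0$. Let $e_0=\frac14(1+b)(1+c)$, $e_1=\frac14(1+b)(1-c)$, $e_2=\frac14(1-b)(1+c)$, $e_3=\frac14(1-b)(1-c)$, and let $\tau$ be the permutation of $\{0,1,2,3\}$ with $\tau(0)=3,\tau(1)=2,\tau(2)=1,\tau(3)=0$. Then for $0\leq i\leq3$ and any $k\in\{0,1,2,3\}\setminus\{i,\tau(i)\}$, the annihilator ideal of the $H$-module $M(2,i)$ is $(ze_{\tau(i)}+e_k+e_{\tau(k)})$.
   Context: $V_i=\Bbbk v_i$ ($0\leq i\leq3$) are the one-dimensional modules of the group algebra of $\langle b,c\rangle\cong$ Klein four-group with $b\cdot v_0=v_0,c\cdot v_0=v_0$; $b\cdot v_1=v_1,c\cdot v_1=-v_1$; $b\cdot v_2=-v_2,c\cdot v_2=v_2$; $b\cdot v_3=-v_3,c\cdot v_3=-v_3$. $M(2,i)$ is the $2$-dimensional $H$-module with basis $v_i, xv_i$ where $b\cdot(xv_i)=-x(b\cdot v_i)$, $c\cdot(xv_i)=-x(c\cdot v_i)$, $z\cdot v_i=xv_i$, $z\cdot(xv_i)=0$. $(a)$ denotes the two-sided ideal of $H$ generated by $a$. *)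

From HB Require Import structures.
From mathcomp Require Import all_boot all_order all_algebra all_field.
Set Implicit Arguments. Unset Strict Implicit. Unset Printing Implicit Defensive.
Import GRing.Theory.
Local Open Scope ring_scope.

Definition H_rel (K : fieldType) (B : algType K) (b c z : B) : Prop :=
  b * b = 1 /\ c * c = 1 /\ b * c = c * b /\ z * b = - (b * z) /\
  z * c = - (c * z) /\ z * z = 0.

(* (A, b, c, z) is the K-algebra presented by generators b, c, z and the
   relations H_rel: universal property of the presentation. *)
Definition is_H (K : fieldType) (A : algType K) (b c z : A) : Prop :=
  H_rel b c z /\
  forall (B : algType K) (b' c' z' : B), H_rel b' c' z' ->
    (exists f : {lrmorphism A -> B}, [/\ f b = b', f c = c' & f z = z'])
    /\ (forall f g : {lrmorphism A -> B},
          f b = b' -> f c = c' -> f z = z' ->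
          g b = b' -> g c = c' -> g z = z' -> f =1 g).

(* eigenvalue signs of b and c on v_i *)
Definition sgn_b (K : fieldType) (i : 'I_4) : K := if (i < 2)%N then 1 else -1.
Definition sgn_c (K : fieldType) (i : 'I_4) : K := if odd i then -1 else 1.

Definition idem (K : fieldType) (A : algType K) (b c : A) (i : 'I_4) : A :=
  (4%:R : K)^-1 *: ((1 + sgn_b K i *: b) * (1 + sgn_c K i *: c)).

Definition tau (i : 'I_4) : 'I_4 := rev_ord i.

(* Action of H on M(2,i) w.r.t. the basis (v_i, x v_i), column vectors *)
Definition Mb (K : fieldType) (i : 'I_4) : 'M[K]_2 :=
  \matrix_(r < 2, s < 2) (if r == s then (if r == 0 :> nat then sgn_b K i else - sgn_b K i) else 0).
Definition Mc (K : fieldType) (i : 'I_4) : 'M[K]_2 :=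
  \matrix_(r < 2, s < 2) (if r == s then (if r == 0 :> nat then sgn_c K i else - sgn_c K i) else 0).
(* z v_i = x v_i, z (x v_i) = 0 *)
Definition Mz (K : fieldType) : 'M[K]_2 :=
  \matrix_(r < 2, s < 2) (if (r == 1 :> nat) && (s == 0 :> nat) then 1 else 0).

Definition annihilates (K : fieldType) (A : algType K) (rho : A -> 'M[K]_2) (h : A) : Prop :=
  forall v : 'cV[K]_2, rho h *m v = 0.

Definition in_ideal2 (R : pzRingType) (a h : R) : Prop :=
  exists n (l r : 'I_n -> R), h = \sum_(j < n) l j * a * r j.

From HB Require Import structures.
From mathcomp Require Import all_boot all_order all_algebra all_field.
From mathcomp Require Import boolp.
From mathcomp.algebra_tactics Require Import ring.
(* With e_j the four orthogonal idempotents, b and c act on e_j and on z e_j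
   by signs and z e_j z = 0, so the eight elements e_j, z e_j span H: the left
   multipliers of their span form a subalgebra containing b, c and z, which is
   all of H by the universal property.  On M(2,i), h = sum_j (al_j e_j + ga_j z e_j)
   acts by the matrix [[al_i, 0], [ga_i, al_(tau i)]], so h annihilates M(2,i)
   iff al_i = al_(tau i) = ga_i = 0.  Conversely, the generator
   a = z e_(tau i) + e_k + e_(tau k) satisfies a e_(tau i) = z e_(tau i) and
   a e_j = e_j for j in {k, tau k}; as {i, tau i, k, tau k} exhausts the indices,
   every summand h e_j of such an h lies in (a). *)

Set Implicit Arguments. Unset Strict Implicit. Unset Printing Implicit Defensive.
Import GRing.Theory.
Local Open Scope ring_scope.

Section PresentationInduction.
Variables (K : fieldType) (A : algType K) (b c z : A).
Hypothesis presA : is_H b c z.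
Variable P : pred A.
Hypothesis P_subalg : subalg_closed P.
Hypotheses (Pb : P b) (Pc : P c) (Pz : P z).

Let S := {x : A | P x}.
HB.instance Definition _ := [isSub of S for @sval A P].
HB.instance Definition _ := [Choice of S by <:].
HB.instance Definition _ :=
  GRing.isSubalgClosed.Build K A P (GRing.subalg_closed_semi P_subalg).
HB.instance Definition _ := [SubChoice_isSubAlgebra of S by <:].

Let valS : S -> A := val.
HB.instance Definition _ := GRing.RMorphism.copy valS (val : S -> A).
HB.instance Definition _ := GRing.Linear.copy valS (val : S -> A).

Lemma is_H_ind x : P x.
Proof.
have [relA univA] := presA.
pose b' : S := Sub b Pb; pose c' : S := Sub c Pc; pose z' : S := Sub z Pz.
have relS : H_rel b' c' z'.
  have [bb [cc [bc [zb [zc zz]]]]] := relA.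
  by do 5?split; apply: val_inj; rewrite /= ?rmorphM ?rmorphN ?rmorph1 ?rmorph0.
have [[f [fb fc fz]] _] := univA S b' c' z' relS.
have [_ uniqA] := univA A b c z relA.
have val_f_id : valS \o f =1 idfun.
  by apply: uniqA; rewrite //= ?fb ?fc ?fz /valS SubK.
by rewrite -[x]val_f_id; apply: valP.
Qed.

End PresentationInduction.

Section TwoSidedIdeal.
Variables (R : pzRingType) (a : R).

Lemma in_ideal2_0 : in_ideal2 a 0.
Proof. by exists 0%N, (fun=> 0), (fun=> 0); rewrite big_ord0. Qed.

Lemma in_ideal2_mul l r : in_ideal2 a (l * a * r).
Proof. by exists 1%N, (fun=> l), (fun=> r); rewrite big_ord1. Qed.

Lemma in_ideal2D u v : in_ideal2 a u -> in_ideal2 a v -> in_ideal2 a (u + v).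
Proof.
move=> [n [l [r ->]]] [m [l' [r' ->]]].
pose glue (f : 'I_n -> R) (f' : 'I_m -> R) j :=
  match split j with inl j1 => f j1 | inr j2 => f' j2 end.
exists (n + m)%N, (glue l l'), (glue r r'); rewrite big_split_ord /=.
by congr (_ + _); apply: eq_bigr => j _; rewrite /glue ?(unsplitK (inl j)) ?(unsplitK (inr j)).
Qed.

End TwoSidedIdeal.

Lemma tau_inj : injective tau.
Proof. exact: rev_ord_inj. Qed.

Lemma tau_neq j : tau j != j.
Proof. by case: j => [[|[|[|[|j]]]] ?]. Qed.

Lemma tau_cover i k j : k != i -> k != tau i ->
  [|| j == i, j == tau i, j == k | j == tau k].
Proof.
by case: i => [[|[|[|[|i]]]] ?] //; case: k => [[|[|[|[|k]]]] ?] //;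
  case: j => [[|[|[|[|j]]]] ?].
Qed.

Lemma sgn_b_sqr (K : fieldType) (j : 'I_4) : sgn_b K j * sgn_b K j = 1.
Proof. by rewrite /sgn_b; case: ifP; rewrite ?mulrNN mulr1. Qed.

Lemma sgn_c_sqr (K : fieldType) (j : 'I_4) : sgn_c K j * sgn_c K j = 1.
Proof. by rewrite /sgn_c; case: ifP; rewrite ?mulrNN mulr1. Qed.

Lemma idem_coef (K : fieldType) (l j : 'I_4) : (4%:R : K) != 0 ->
  4%:R^-1 * ((1 + sgn_b K l * sgn_b K j) * (1 + sgn_c K l * sgn_c K j)) = (l == j)%:R.
Proof.
move=> four.
by case: l => [[|[|[|[|l]]]] ?] //; case: j => [[|[|[|[|j]]]] ?] //;
  rewrite /sgn_b /sgn_c /=; field.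
Qed.

Section Idempotents.
Variables (K : fieldType) (A : algType K) (b c z : A).
Hypothesis relA : H_rel b c z.
Hypothesis four : (4%:R : K) != 0.
Local Notation e := (idem b c).

Let bb : b * b = 1. Proof. by case: relA. Qed.
Let cc : c * c = 1. Proof. by case: relA => _ []. Qed.
Let bc : b * c = c * b. Proof. by case: relA => _ [] _ []. Qed.
Let zb : z * b = - (b * z). Proof. by case: relA => _ [] _ [] _ []. Qed.
Let zc : z * c = - (c * z). Proof. by case: relA => _ [] _ [] _ [] _ []. Qed.
Let zz : z * z = 0. Proof. by case: relA => _ [] _ [] _ [] _ []. Qed.

Lemma mul_involution_proj (x : A) (s : K) : x * x = 1 -> s * s = 1 ->
  x * (1 + s *: x) = s *: (1 + s *: x).
Proof.
move=> xx ss.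
by rewrite mulrDr mulr1 -scalerAr xx scalerDr scalerA ss scale1r addrC.
Qed.

Lemma mul_b_idem j : b * e j = sgn_b K j *: e j.
Proof.
rewrite /idem -scalerAr mulrA (mul_involution_proj bb (sgn_b_sqr K j)).
by rewrite -scalerAl scalerA mulrC -scalerA.
Qed.

Lemma mul_c_idem j : c * e j = sgn_c K j *: e j.
Proof.
have cbC : c * (1 + sgn_b K j *: b) = (1 + sgn_b K j *: b) * c.
  by rewrite mulrDr mulrDl mulr1 mul1r -scalerAr -scalerAl bc.
rewrite /idem -scalerAr mulrA cbC -mulrA (mul_involution_proj cc (sgn_c_sqr K j)).
by rewrite -scalerAr scalerA mulrC -scalerA.
Qed.

Lemma mul_b_z_idem j : b * (z * e j) = - sgn_b K j *: (z * e j).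
Proof. by rewrite mulrA -[b * z]opprK -zb mulNr -mulrA mul_b_idem scaleNr scalerAr. Qed.

Lemma mul_c_z_idem j : c * (z * e j) = - sgn_c K j *: (z * e j).
Proof. by rewrite mulrA -[c * z]opprK -zc mulNr -mulrA mul_c_idem scaleNr scalerAr. Qed.

Lemma mul_idem l j : e l * e j = (l == j)%:R *: e j.
Proof.
have affine_eigen (x : A) (s u : K) : x * e j = u *: e j ->
    (1 + s *: x) * e j = (1 + s * u) *: e j.
  by move=> xe; rewrite mulrDl mul1r -scalerAl xe scalerA scalerDl scale1r.
rewrite [e l]/idem -scalerAl -mulrA (affine_eigen _ _ _ (mul_c_idem j)).
rewrite -scalerAr (affine_eigen _ _ _ (mul_b_idem j)) 2!scalerA.
by rewrite -mulrA [(1 + sgn_c K l * _) * _]mulrC idem_coef.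
Qed.

Lemma sum_idem : \sum_j e j = 1.
Proof.
rewrite !big_ord_recr big_ord0 /= /idem /sgn_b /sgn_c /= add0r -!scalerDr.
rewrite -!addrA -mulrDr addrA -mulrDr -mulrDl !scaleN1r !scale1r.
have two (x : A) : 1 + x + (1 - x) = 2%:R by rewrite addrACA subrr addr0.
by rewrite !two -natrM -scaler_nat scalerA mulVf // scale1r.
Qed.

Definition idem_comb (al ga : 'I_4 -> K) : A :=
  \sum_j (al j *: e j + ga j *: (z * e j)).

Lemma idem_combD a al ga al' ga' :
  a *: idem_comb al ga + idem_comb al' ga' =
  idem_comb (fun j => a * al j + al' j) (fun j => a * ga j + ga' j).
Proof.
rewrite scaler_sumr -big_split; apply: eq_bigr => j _ /=.
by rewrite !scalerDl !scalerDr !scalerA addrACA.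
Qed.

Lemma idem_comb1 : idem_comb (fun=> 1) (fun=> 0) = 1.
Proof. by rewrite -sum_idem; apply: eq_bigr => j _; rewrite scale0r addr0 scale1r. Qed.

Lemma mul_b_idem_comb al ga : b * idem_comb al ga =
  idem_comb (fun j => al j * sgn_b K j) (fun j => - (ga j * sgn_b K j)).
Proof.
rewrite mulr_sumr; apply: eq_bigr => j _.
by rewrite mulrDr -(scalerAr (al j)) -(scalerAr (ga j)) mul_b_idem mul_b_z_idem
  !(scalerA _ _ (e j)) !(scalerA _ _ (z * e j)) mulrN.
Qed.

Lemma mul_c_idem_comb al ga : c * idem_comb al ga =
  idem_comb (fun j => al j * sgn_c K j) (fun j => - (ga j * sgn_c K j)).
Proof.
rewrite mulr_sumr; apply: eq_bigr => j _.
by rewrite mulrDr -(scalerAr (al j)) -(scalerAr (ga j)) mul_c_idem mul_c_z_idem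
  !(scalerA _ _ (e j)) !(scalerA _ _ (z * e j)) mulrN.
Qed.

Lemma mul_z_idem_comb al ga : z * idem_comb al ga = idem_comb (fun=> 0) al.
Proof.
rewrite mulr_sumr; apply: eq_bigr => j _.
by rewrite mulrDr -(scalerAr (al j)) -(scalerAr (ga j)) mulrA zz mul0r scaler0 addr0
  scale0r add0r.
Qed.

Lemma idem_comb_mul_idem al ga j :
  idem_comb al ga * e j = al j *: e j + ga j *: (z * e j).
Proof.
rewrite mulr_suml (bigD1 j) //= big1 => [|l /negbTE ne_lj];
  rewrite mulrDl -(scalerAl (al _)) -(scalerAl (ga _)) -mulrA !mul_idem.
  by rewrite eqxx !scale1r addr0.
by rewrite ne_lj !scale0r mulr0 !scaler0 addr0.
Qed.

Lemma idem_comb_surj : is_H b c z -> forall x : A, exists al ga, x = idem_comb al ga.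
Proof.
move=> presA.
pose P := [pred x : A | `[< forall al ga, exists al' ga',
                             x * idem_comb al ga = idem_comb al' ga' >]].
have P_subalg : subalg_closed P.
  split.
  - by apply/asboolP => al ga; exists al, ga; rewrite mul1r.
  - move=> a u v /asboolP Pu /asboolP Pv; apply/asboolP => al ga.
    have [alu [gau Eu]] := Pu al ga; have [alv [gav Ev]] := Pv al ga.
    by rewrite mulrDl -scalerAl Eu Ev; eexists; eexists; apply: idem_combD.
  - move=> u v /asboolP Pu /asboolP Pv; apply/asboolP => al ga.
    by have [alv [gav]] := Pv al ga; rewrite -mulrA => ->; apply: Pu.
have Pb : P b by apply/asboolP => al ga; eexists; eexists; apply: mul_b_idem_comb.
have Pc : P c by apply/asboolP => al ga; eexists; eexists; apply: mul_c_idem_comb.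
have Pz : P z by apply/asboolP => al ga; eexists; eexists; apply: mul_z_idem_comb.
move=> x; have /asboolP Px := is_H_ind presA P_subalg Pb Pc Pz x.
by rewrite -[x]mulr1 -idem_comb1; apply: Px.
Qed.

Lemma idem_comb_in_ideal2 i k al ga : k != i -> k != tau i ->
  al i = 0 -> al (tau i) = 0 -> ga i = 0 ->
  in_ideal2 (z * e (tau i) + e k + e (tau k)) (idem_comb al ga).
Proof.
move=> ki kti al_i al_ti ga_i; set a := _ + _ + _.
have a_idem j : a * e j =
    (tau i == j)%:R *: (z * e j) + ((k == j) + (tau k == j))%:R *: e j.
  by rewrite !mulrDl -mulrA !mul_idem natrD scalerDl addrA -scalerAr.
clearbody a.
have fixed_in_ideal2 j : a * e j = e j ->
    in_ideal2 a (al j *: e j + ga j *: (z * e j)).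
  move=> <-; rewrite (_ : _ + _ = ((al j)%:A + ga j *: z) * a * e j).
    exact: in_ideal2_mul.
  by rewrite -[RHS]mulrA mulrDl mulr_algl -scalerAl.
rewrite -[idem_comb _ _]mulr1 -sum_idem mulr_sumr.
apply: big_ind => [|u v|j _]; [exact: in_ideal2_0 | exact: in_ideal2D |].
rewrite idem_comb_mul_idem.
case/or4P: (tau_cover j ki kti) => /eqP->.
- by rewrite al_i ga_i !scale0r addr0; apply: in_ideal2_0.
- rewrite al_ti scale0r add0r (_ : z * e (tau i) = a * e (tau i)).
    by rewrite -mulr_algl mulrA; apply: in_ideal2_mul.
  rewrite a_idem eqxx (negbTE kti) (inj_eq tau_inj) (negbTE ki).
  by rewrite scale0r addr0 scale1r.
- apply: fixed_in_ideal2; rewrite a_idem eqxx (negbTE (tau_neq k)).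
  by rewrite [tau i == _]eq_sym (negbTE kti) scale0r add0r scale1r.
- apply: fixed_in_ideal2; rewrite a_idem eqxx [k == _]eq_sym (negbTE (tau_neq k)).
  by rewrite (inj_eq tau_inj) [i == _]eq_sym (negbTE ki) scale0r add0r scale1r.
Qed.

End Idempotents.

Lemma mulmx_cV_eq0 (R : pzRingType) m n (M : 'M[R]_(m, n)) :
  (forall v : 'cV[R]_n, M *m v = 0) -> M = 0.
Proof.
move=> Mv0; apply/matrixP => r s.
by have /matrixP/(_ r 0) := Mv0 (delta_mx s 0); rewrite -colE !mxE.
Qed.

Lemma sum_mul_delta (R : pzSemiRingType) (I : finType) (F : I -> R) (l : I) :
  \sum_j F j * (j == l)%:R = F l.
Proof.
rewrite (bigD1 l) //= eqxx mulr1 big1 ?addr0 // => j /negbTE ->.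
by rewrite mulr0.
Qed.

(* x v_i carries the b- and c-signs of v_(tau i). *)
Definition Me (K : fieldType) (i j : 'I_4) : 'M[K]_2 :=
  \matrix_(r < 2, s < 2)
    (if r == s then (if r == 0 :> nat then (j == i)%:R else (j == tau i)%:R) else 0).

Lemma idem_mx (K : fieldType) (i j : 'I_4) : (4%:R : K) != 0 ->
  4%:R^-1 *: ((1 + sgn_b K j *: Mb K i) * (1 + sgn_c K j *: Mc K i)) = Me K i j.
Proof.
move=> four; apply/matrixP => r s; rewrite -mulmxE !mxE big_ord_recr big_ord1 /= !mxE.
by case: i => [[|[|[|[|i]]]] ?] //; case: j => [[|[|[|[|j]]]] ?] //;
  case: r => [[|[|r]] ?] //; case: s => [[|[|s]] ?] //;
  rewrite /sgn_b /sgn_c /tau /=; field.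
Qed.

Lemma Mz_mul_Me (K : fieldType) (i j : 'I_4) :
  Mz K * Me K i j =
  \matrix_(r < 2, s < 2) (if (r == 1 :> nat) && (s == 0 :> nat) then (j == i)%:R else 0).
Proof.
apply/matrixP => r s; rewrite -mulmxE !mxE big_ord_recr big_ord1 /= !mxE.
by case: r => [[|[|r]] ?] //; case: s => [[|[|s]] ?] //=;
  rewrite ?mul0r ?mulr0 ?mul1r ?addr0 ?add0r.
Qed.

Lemma Me_ideal_gen_eq0 (K : fieldType) (i k : 'I_4) : k != i -> k != tau i ->
  Mz K * Me K i (tau i) + Me K i k + Me K i (tau k) = 0.
Proof.
rewrite Mz_mul_Me => ki kti; apply/matrixP => r s; rewrite !mxE.
move: ki kti; rewrite /tau.
by case: i => [[|[|[|[|i]]]] ?] //; case: k => [[|[|[|[|k]]]] ?] //;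
  case: r => [[|[|r]] ?] //; case: s => [[|[|s]] ?] //=; rewrite ?addr0.
Qed.

Lemma in_ideal2_annihilates (K : fieldType) (A : algType K)
    (rho : {rmorphism A -> 'M[K]_2}) (a h : A) :
  rho a = 0 -> in_ideal2 a h -> annihilates rho h.
Proof.
move=> rho_a [n [l [r ->]]] v.
by rewrite rmorph_sum big1 ?mul0mx // => j _; rewrite !rmorphM rho_a mulr0 mul0r.
Qed.

Section RepresentationM2.
Variables (K : fieldType) (A : algType K) (b c z : A) (i : 'I_4).
Variable rho : {lrmorphism A -> 'M[K]_2}.
Hypotheses (rho_b : rho b = Mb K i) (rho_c : rho c = Mc K i) (rho_z : rho z = Mz K).
Hypothesis four : (4%:R : K) != 0.

Let rhoZ (u : K) (x : A) : rho (u *: x) = u *: rho x := linearZ_LR rho u x.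

Lemma rho_idem j : rho (idem b c j) = Me K i j.
Proof.
by rewrite /idem rhoZ rmorphM !rmorphD /= !rhoZ rmorph1 rho_b rho_c idem_mx.
Qed.

Lemma rho_idem_comb_eq0 al ga : rho (idem_comb b c z al ga) = 0 ->
  [/\ al i = 0, al (tau i) = 0 & ga i = 0].
Proof.
move=> /matrixP rho0.
have entry r s (F : 'I_4 -> K) :
    (forall j, al j * Me K i j r s + ga j * (Mz K * Me K i j) r s = F j) ->
    \sum_j F j = 0.
  move=> EF; have := rho0 r s; rewrite mxE linear_sum summxE => E0.
  rewrite -[RHS]E0.
  apply: eq_bigr => j _; rewrite -EF.
  by rewrite linearD /= (rhoZ (al j)) (rhoZ (ga j)) rmorphM /= rho_z rho_idem !mxE.
split.
- rewrite -(sum_mul_delta al i); apply: (entry 0 0) => j.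
  by rewrite Mz_mul_Me !mxE /= mulr0 addr0.
- rewrite -(sum_mul_delta al (tau i)); apply: (entry 1 1) => j.
  by rewrite Mz_mul_Me !mxE /= mulr0 addr0.
- rewrite -(sum_mul_delta ga i); apply: (entry 1 0) => j.
  by rewrite Mz_mul_Me !mxE /= mulr0 add0r.
Qed.

Lemma rho_ideal_gen_eq0 k : k != i -> k != tau i ->
  rho (z * idem b c (tau i) + idem b c k + idem b c (tau k)) = 0.
Proof.
by move=> ki kti; rewrite !rmorphD rmorphM /= rho_z !rho_idem Me_ideal_gen_eq0.
Qed.

End RepresentationM2.

Theorem corollary5p2 (K : closedFieldType) (HK : [pchar K] =i pred0)
  (H : algType K) (b c z : H) (HH : is_H b c z)
  (i : 'I_4) (rho : {lrmorphism H -> 'M[K]_2})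
  (Hrb : rho b = Mb K i) (Hrc : rho c = Mc K i) (Hrz : rho z = Mz K)
  (k : 'I_4) (Hki : k != i) (Hkt : k != tau i) :
  forall h : H, annihilates rho h <->
    in_ideal2 (z * idem b c (tau i) + idem b c k + idem b c (tau k)) h.
Proof.
have four : (4%:R : K) != 0 by rewrite ((pcharf0P K).1 HK).
have relH : H_rel b c z by case: HH.
move=> h; have [al [ga ->]] := idem_comb_surj relH four HH h.
split => [/mulmx_cV_eq0 | ].
- case/(rho_idem_comb_eq0 Hrb Hrc Hrz four) => al_i al_ti ga_i.
  exact: idem_comb_in_ideal2.
- apply: in_ideal2_annihilates; exact: rho_ideal_gen_eq0.
Qed.
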